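(* Let $\mu \in X^*(\underline{T})$ be a character. We have: \begin{align*} \mathrm{Trns}_\mu\big(\Lambda_W^\mu\times\mathcal{A}\big)= \left\{ \begin{aligned} \lambda\in X_1(\underline{T})/(p-\pi)X^0(\underline{T})&\quad\text{such that $\lambda$ is $p$-regular and}\\ &\quad(\lambda-\mu+\eta)|_{\underline{Z}}\in(p-\pi)X^*(\underline{Z}) \end{aligned} \right\} \end{align*}
   Context: Let $\underline{G}=(\mathrm{Res}_{\mathbb{F}_{p^f}/\mathbb{F}_p}\mathrm{GL}_3)\times\mathbb{F}\cong\mathrm{GL}_3^f$ with diagonal torus $\underline T$ and center $\underline Z$, $X^*(\underline T)\cong(\mathbb{Z}^3)^f$, $X_1(\underline T)$ the $p$-restricted dominant weights, $\eta=((1,0,-1))_i$, $\pi$ the Frobenius shift $(\pi\lambda)_i=\lambda_{i-1}$. Let $\Lambda_W\supset\Lambda_R$ be the weight and root lattices of $\mathrm{SL}_3^f$, $\lambda\mapsto\overline\lambda$ restriction $X^*(\underline T)\to\Lambda_W$ with kernel $X^0(\underline T)$, $\mathrm{can}$ the canonical identification of $\Lambda_R$ with the characters of $\underline T$ trivial on $\underline Z$, $\mathrm{sec}:\Lambda_W\to X^*(\underline T)$ a section. With the $p$-dot action $t_\lambda w\cdot\mu=p\lambda+w(\mu+\eta)-\eta$, let $\underline A$ be the lowest dominant $p$-restricted alcove, $\mathcal A=\{A,B\}^f$ the dominant $p$-restricted alcoves, $\widetilde{\underline W}^{+,\mathrm{der}}_1$ the elements $wt_{-\pi^{-1}\omega}$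 of $\Lambda_W\rtimes S_3^f$ taking $\underline A$ into $\mathcal A$. Writing uniquely elements of $\Lambda_W\times\mathcal A$ as $(\omega+\nu,\pi wt_{-\pi^{-1}\omega}\cdot\underline A)$, $\nu\in\Lambda_R$, define $\mathrm{Trns}_\mu(\omega+\nu,\pi wt_{-\pi^{-1}\omega}\cdot\underline A)=wt_{-\pi^{-1}\mathrm{sec}(\omega)}\cdot(\mu-\eta+\mathrm{can}(\nu)+\mathrm{sec}(\omega))$ modulo $(p-\pi)X^0(\underline T)$, and $\Lambda_W^\mu=\{\omega\in\Lambda_W:\omega+\overline{\mu-\eta}\in\underline A\}$. A weight $\lambda$ is $p$-regular if $\langle\lambda+\eta,\alpha^\vee\rangle\notin p\mathbb Z$ for all positive roots $\alpha$. *)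

From HB Require Import structures.
From mathcomp Require Import all_boot all_order all_algebra all_fingroup.
Set Implicit Arguments. Unset Strict Implicit. Unset Printing Implicit Defensive.
Import Order.TTheory GRing.Theory Num.Theory.
Local Open Scope ring_scope.

(* Conventions (G = GL_3^f, embeddings indexed by 'I_f, coordinates by 'I_3):
   X^*(T) = 'M[int]_(f,3) (row i = the i-th copy of Z^3).
   X^*(T) (x) Q = 'M[rat]_(f,3); Lambda_W (x) Q is identified with the
   row-sum-zero rational matrices via the orthogonal projection [proj];
   Lambda_W = image of X^*(T) under [proj]; Lambda_R = integer row-sum-zero
   matrices, and [can] is then the identity (inclusion into X^*(T)). *)

Definition c0 : 'I_3 := @Ordinal 3 0 isT.
Definition c1 : 'I_3 := @Ordinal 3 1 isT.
Definition c2 : 'I_3 := @Ordinal 3 2 isT.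

Section Defs.
Variable f : nat.

Definition piM (R : Type) n (x : 'M[R]_(f, n)) : 'M[R]_(f, n) :=
  \matrix_(i, j) x (ord_pred i) j.
Definition piinvM (R : Type) n (x : 'M[R]_(f, n)) : 'M[R]_(f, n) :=
  \matrix_(i, j) x (ordS i) j.

Definition eta (R : pzRingType) : 'M[R]_(f, 3) :=
  \matrix_(i, j) (1 - (j : nat)%:R).

Definition wact (R : Type) (w : 'I_f -> 'S_3) (x : 'M[R]_(f, 3)) : 'M[R]_(f, 3) :=
  \matrix_(i, j) x i ((w i)^-1%g j).

Definition dot (R : pzRingType) (p : nat) (w : 'I_f -> 'S_3) (nu x : 'M[R]_(f, 3)) :
  'M[R]_(f, 3) :=
  wact w (p%:R *: nu + x + eta R) - eta R.

Definition inQ (l : 'M[int]_(f, 3)) : 'M[rat]_(f, 3) := map_mx (fun z => z%:~R) l.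

Definition proj (x : 'M[rat]_(f, 3)) : 'M[rat]_(f, 3) :=
  \matrix_(i, j) (x i j - (x i c0 + x i c1 + x i c2) / 3%:R).

Definition overline (l : 'M[int]_(f, 3)) : 'M[rat]_(f, 3) := proj (inQ l).

Definition inLW (om : 'M[rat]_(f, 3)) : Prop := exists l, overline l = om.

(* integral characters trivial on Z (= can(Lambda_R)) *)
Definition sumzero (nu : 'M[int]_(f, 3)) : Prop :=
  forall i, nu i c0 + nu i c1 + nu i c2 = 0.

Definition inX0 (c : 'M[int]_(f, 3)) : Prop :=
  forall i, c i c0 = c i c1 /\ c i c1 = c i c2.

Definition congr (p : nat) (l l' : 'M[int]_(f, 3)) : Prop :=
  exists c, inX0 c /\ l - l' = p%:R *: c - piM c.

(* the two p-restricted alcoves of GL_3 *)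
Inductive Alc := AlcA | AlcB.

Definition inAlc (p : nat) (C : 'I_f -> Alc) (x : 'M[rat]_(f, 3)) : Prop :=
  forall i,
    let a := x i c0 - x i c1 + 1 in
    let b := x i c1 - x i c2 + 1 in
    match C i with
    | AlcA => [/\ 0 < a, 0 < b & a + b < p%:R]
    | AlcB => [/\ a < p%:R, b < p%:R & p%:R < a + b]
    end.

Definition lowA : 'I_f -> Alc := fun _ => AlcA.

Definition piAlc (C : 'I_f -> Alc) : 'I_f -> Alc := fun i => C (ord_pred i).

Definition maps_onto (p : nat) (w : 'I_f -> 'S_3) (om : 'M[rat]_(f, 3))
    (C : 'I_f -> Alc) : Prop :=
  forall x, inAlc p lowA x <-> inAlc p C (dot p w (- piinvM om) x).

Definition inLWmu (p : nat) (mu : 'M[int]_(f, 3)) (om : 'M[rat]_(f, 3)) : Prop :=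
  inLW om /\ inAlc p lowA (om + overline (mu - eta int)).

(* Trns_mu(om', A') is the class of l modulo (p - pi) X^0(T):
   (om', A') = (om + nu, pi (w t_{-pi^{-1} om} . A)) with nu in Lambda_R and
   w t_{-pi^{-1} om} in W~^{+,der}_1 (i.e. it maps A to an alcove C of the
   set {A,B}^f), and l == w t_{-pi^{-1} sec(om)} . (mu - eta + can(nu) + sec(om)). *)
Definition Trns (p : nat) (mu : 'M[int]_(f, 3)) (sec : 'M[rat]_(f, 3) -> 'M[int]_(f, 3))
    (om' : 'M[rat]_(f, 3)) (A' : 'I_f -> Alc) (l : 'M[int]_(f, 3)) : Prop :=
  exists (om : 'M[rat]_(f, 3)) (nu : 'M[int]_(f, 3)) (w : 'I_f -> 'S_3) (C : 'I_f -> Alc),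
    [/\ inLW om /\ sumzero nu, om' = om + inQ nu,
        maps_onto p w om C, A' = piAlc C &
        congr p l (dot p w (- piinvM (sec om)) (mu - eta int + nu + sec om))].

Definition X1 (p : nat) (l : 'M[int]_(f, 3)) : Prop :=
  forall i, (0 <= l i c0 - l i c1 <= p%:Z - 1) /\ (0 <= l i c1 - l i c2 <= p%:Z - 1).

Definition pregular (p : nat) (l : 'M[int]_(f, 3)) : Prop :=
  forall i, [/\ ~~ (p%:Z %| l i c0 - l i c1 + 1)%Z,
               ~~ (p%:Z %| l i c1 - l i c2 + 1)%Z &
               ~~ (p%:Z %| l i c0 - l i c2 + 2)%Z].

(* restriction X^*(T) -> X^*(Z) = Z^f *)
Definition resZ (l : 'M[int]_(f, 3)) : 'M[int]_(f, 1) :=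
  \matrix_(i, j) (l i c0 + l i c1 + l i c2).

Definition central (p : nat) (mu l : 'M[int]_(f, 3)) : Prop :=
  exists z : 'M[int]_(f, 1), resZ (l - mu + eta int) = p%:R *: z - piM z.

End Defs.

(* Everything is decided row by row.  Membership in an alcove only sees the
   image in Lambda_W (x) Q, so the weight lambda that Trns_mu assigns to
   (om + nu, pi C) lies in C exactly when w t_{-pi^{-1} om} sends the point
   om + nu + overline(mu - eta) of A into C; and the integral points of the
   alcoves A and B are exactly the p-restricted p-regular weights.  Since W
   preserves row sums and translations multiply them by p, we get
   (lambda - mu + eta)|_Z = (p - pi) z with z = -(row sums of pi^{-1} sec om).
   Conversely, the residues of z modulo 3 (classes in Lambda_W / Lambda_R)
   and the alcoves containing lambda determine an explicit w t_{-pi^{-1} om}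
   mapping A onto C, and nu in Lambda_R is then solved for. *)

From Pilot Require Import Defs.
From HB Require Import structures.
From mathcomp Require Import all_boot all_order all_algebra all_fingroup.
From mathcomp Require Import ring lra zify.
Set Implicit Arguments. Unset Strict Implicit. Unset Printing Implicit Defensive.
Import Order.TTheory GRing.Theory Num.Theory.
Local Open Scope ring_scope.

Lemma ord3P (j : 'I_3) : [\/ j = c0, j = c1 | j = c2].
Proof.
by case: j => [[|[|[|//]]] ?]; [apply: Or31 | apply: Or32 | apply: Or33]; apply: val_inj.
Qed.

Lemma sum3_perm (R : nmodType) (s : 'S_3) (F : 'I_3 -> R) :
  F (s c0) + F (s c1) + F (s c2) = F c0 + F c1 + F c2.
Proof.
have sum3 (G : 'I_3 -> R) : \sum_j G j = G c0 + G c1 + G c2.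
  by rewrite !big_ord_recl big_ord0 addr0 addrA; congr (G _ + G _ + G _); apply: val_inj.
by rewrite -!sum3 [RHS](reindex_inj (@perm_inj _ s)).
Qed.

Definition rowAlc (R : numDomainType) (p : nat) (c : Alc) (x : 'I_3 -> R) : Prop :=
  let a := x c0 - x c1 + 1 in
  let b := x c1 - x c2 + 1 in
  match c with
  | AlcA => [/\ 0 < a, 0 < b & a + b < p%:R]
  | AlcB => [/\ a < p%:R, b < p%:R & p%:R < a + b]
  end.

Lemma rowAlc_int p c (g : 'I_3 -> int) :
  rowAlc p c (fun j => (g j)%:~R : rat) <-> rowAlc p c g.
Proof.
have cast_pair (a b : int) : (a%:~R - b%:~R + 1 : rat) = (a - b + 1)%:~R.
  by rewrite intrD intrB.
rewrite /rowAlc !cast_pair -intrD -[p%:R]/(p%:Z%:~R) !ltr_int !ltr0z natz.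
by case: c.
Qed.

Lemma not_dvdz_between (p : nat) (a : int) :
  0 < a < p%:Z \/ p%:Z < a < 2 * p%:Z -> ~~ (p%:Z %| a)%Z.
Proof.
move=> ha; apply/negP => /dvdzP [q hq]; rewrite {}hq in ha.
have [q_le0 | [q_eq1 | q_ge2]] : q <= 0 \/ q = 1 \/ 2 <= q by lia.
- by case: ha; nia.
- by rewrite q_eq1 mul1r in ha; lia.
- by case: ha; nia.
Qed.

Definition X1_row (p : nat) (g : 'I_3 -> int) : Prop :=
  (0 <= g c0 - g c1 <= p%:Z - 1) /\ (0 <= g c1 - g c2 <= p%:Z - 1).

Definition pregular_row (p : nat) (g : 'I_3 -> int) : Prop :=
  [/\ ~~ (p%:Z %| g c0 - g c1 + 1)%Z, ~~ (p%:Z %| g c1 - g c2 + 1)%Z &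
      ~~ (p%:Z %| g c0 - g c2 + 2)%Z].

Lemma rowAlc_int_restricted_regular p c (g : 'I_3 -> int) :
  rowAlc p c g -> X1_row p g /\ pregular_row p g.
Proof.
case: c => -[H1 H2 H3]; (split; first by split; lia).
  by split; apply: not_dvdz_between; left; lia.
by split; apply: not_dvdz_between; [left | left | right]; lia.
Qed.

Definition alc_of (p : nat) (g : 'I_3 -> int) : Alc :=
  if g c0 - g c2 + 2 < p%:Z then AlcA else AlcB.

Lemma restricted_regular_rowAlc p (g : 'I_3 -> int) :
  X1_row p g -> pregular_row p g -> rowAlc p (alc_of p g) g.
Proof.
move=> [Ha Hb] [N1 N2 N3].
have neq_p (a : int) : ~~ (p%:Z %| a)%Z -> a != p%:Z.
  by apply: contraNneq => ->; apply: dvdzz.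
have n1 := neq_p _ N1; have n2 := neq_p _ N2; have n3 := neq_p _ N3.
by rewrite /alc_of; case: ifP => hs; rewrite /rowAlc /=; split; lia.
Qed.

(* For a class k in Lambda_W / Lambda_R = Z/3 and an alcove c, one row of the
   element w t_{-om} of the extended affine Weyl group sending A onto c, with
   w = (alc_perm k c)^-1 and om the image of alc_shift k c in Lambda_W. *)
Definition alc_perm (k : 'I_3) (c : Alc) : 'S_3 :=
  match val k, c with
  | 0, AlcA => 1 | 0, AlcB => tperm c0 c2
  | 1, AlcA => tperm c0 c1 * tperm c1 c2 | 1, AlcB => tperm c0 c1
  | _, AlcA => tperm c1 c2 * tperm c0 c1 | _, AlcB => tperm c1 c2
  end%g.

Definition alc_shift (k : 'I_3) (c : Alc) (j : 'I_3) : int :=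
  nth 0 (match val k, c with
         | 0, AlcA => [:: 0; 0; 0] | 0, AlcB => [:: 1; 0; -1]
         | 1, AlcA => [:: 0; 0; -1] | 1, AlcB => [:: 0; -1; 0]
         | _, AlcA => [:: 0; -1; -1] | _, AlcB => [:: -1; 0; -1]
         end) j.

Lemma alc_shift_sum k c :
  alc_shift k c c0 + alc_shift k c c1 + alc_shift k c c2 = - k%:Z.
Proof. by case: k => [[|[|[|//]]] ?]; case: c. Qed.

Lemma rowAlc_alc_elt p k c (x y : 'I_3 -> rat) :
  let s := alc_perm k c in let t := alc_shift k c in
  (forall j, y j = x (s j) - p%:R * ((t (s j))%:~R - (t c0 + t c1 + t c2)%:~R / 3%:R)
                   + (j : nat)%:R - (s j : nat)%:R) ->
  rowAlc p AlcA x <-> rowAlc p c y.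
Proof.
move=> /= ys; rewrite /rowAlc !ys {ys}.
case: k => [[|[|[|//]]] ?]; case: c.
all: rewrite /alc_shift /= ?permM !permE /= /intmul /= ?mulr0n ?mulr1n.
all: by split=> -[H1 H2 H3]; split; lra.
Qed.

Definition residue3 (z : int) : 'I_3 := inord `|(z %% 3)%Z|%N.

Lemma dvdz_sub_residue3 (z : int) : (3 %| z - (residue3 z)%:Z)%Z.
Proof.
have z3_ge0 : 0 <= (z %% 3)%Z by apply: modz_ge0.
rewrite /residue3 inordK; last by rewrite -ltz_nat gez0_abs // ltz_pmod.
by rewrite gez0_abs // {1}(divz_eq z 3) addrK dvdz_mull.
Qed.

Section Weights.
Variables p f : nat.
Implicit Types (w : 'I_f -> 'S_3) (C : 'I_f -> Alc).
Implicit Types (c l nu : 'M[int]_(f, 3)) (X Y : 'M[rat]_(f, 3)).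

(* X and Y differ by an element of X^0(T) (x) Q, i.e. by a matrix with
   constant rows. *)
Definition eq_modX0 (X Y : 'M[rat]_(f, 3)) : Prop :=
  forall i j, X i j - Y i j = X i c0 - Y i c0.

Lemma inAlc_eq_modX0 C X Y : eq_modX0 X Y -> inAlc p C X <-> inAlc p C Y.
Proof.
move=> XY; split=> H i; have := H i.
all: have := XY i c1; have := XY i c2; rewrite /=.
all: by case: (C i) => e2 e1 [H1 H2 H3]; split; lra.
Qed.

Lemma eq_modX0_dot w (a x b y : 'M[rat]_(f, 3)) :
  eq_modX0 (p%:R *: a + x + Defs.eta f rat) (p%:R *: b + y + Defs.eta f rat) ->
  eq_modX0 (dot p w a x) (dot p w b y).
Proof.
move=> h i j; rewrite /dot !mxE.
have := h i ((w i)^-1%g j); have := h i ((w i)^-1%g c0); rewrite !mxE; lra.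
Qed.

Lemma inQ_dot w (a x : 'M[int]_(f, 3)) :
  inQ (dot p w a x) = dot p w (inQ a) (inQ x).
Proof.
apply/matrixP => i j; rewrite /dot /inQ !mxE.
by rewrite intrB !intrD intrM !intrN !natz mulr1z.
Qed.

Lemma inX0_row c : inX0 c -> forall i j, c i j = c i c0.
Proof.
move=> c_X0 i j; have [e01 e12] := c_X0 i.
by case: (ord3P j) => ->; rewrite ?e01 ?e12.
Qed.

Lemma congr_eq_modX0 (l l' : 'M[int]_(f, 3)) :
  congr p l l' -> eq_modX0 (inQ l) (inQ l').
Proof.
move=> [c [c_X0 /matrixP dl]] i j; rewrite !mxE -!intrB.
have := dl i j; have := dl i c0; rewrite !mxE => -> ->.
by rewrite (inX0_row c_X0 i j) (inX0_row c_X0 (ord_pred i) j).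
Qed.

Lemma congr_trans (l1 l2 l3 : 'M[int]_(f, 3)) :
  congr p l1 l2 -> congr p l2 l3 -> congr p l1 l3.
Proof.
move=> [c [c_X0 d12]] [c' [c'_X0 d23]]; exists (c + c'); split.
  by move=> i; have := c_X0 i; have := c'_X0 i; rewrite !mxE => -[-> ->] [-> ->].
rewrite -(subrKA l2) d12 d23; apply/matrixP => i j; rewrite !mxE; ring.
Qed.

Lemma overline_add (a : 'M[int]_(f, 3)) nu :
  sumzero nu -> overline (a + nu) = overline a + inQ nu.
Proof.
move=> nu0; apply/matrixP => i j; rewrite /overline /proj /inQ !mxE.
have -> : nu i c2 = - nu i c0 - nu i c1 by have := nu0 i; lia.
rewrite !(intrD, intrB, intrN); ring.
Qed.


Definition rowsum (R : nmodType) (X : 'M[R]_(f, 3)) (i : 'I_f) : R :=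
  X i c0 + X i c1 + X i c2.

Lemma rowsum_dot w (a x : 'M[int]_(f, 3)) i :
  rowsum (dot p w a x) i = p%:R * rowsum a i + rowsum x i.
Proof.
have := sum3_perm ((w i)^-1%g) (fun j => (p%:R *: a + x + Defs.eta f int) i j).
rewrite /rowsum /dot !mxE /=; lia.
Qed.

(* With s = sec om, this is the weight that Trns_mu assigns to (om + nu, pi C). *)
Definition trns_rep (mu s nu : 'M[int]_(f, 3)) w : 'M[int]_(f, 3) :=
  dot p w (- piinvM s) (mu - Defs.eta f int + nu + s).

Lemma central_trns_rep mu s nu w : sumzero nu -> central p mu (trns_rep mu s nu w).
Proof.
move=> nu0; exists (\matrix_(i, _) - rowsum s (ordS i)); apply/matrixP => i j.
have := rowsum_dot w (- piinvM s) (mu - Defs.eta f int + nu + s) i.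
rewrite -/(trns_rep mu s nu w); set L := trns_rep mu s nu w.
have := nu0 i; rewrite /resZ /rowsum !mxE ord_predK /=; lia.
Qed.

Lemma trns_rep_eq_modX0 mu s nu w om :
  overline s = om ->
  eq_modX0 (inQ (trns_rep mu s nu w))
           (dot p w (- piinvM om) (om + inQ nu + overline (mu - Defs.eta f int))).
Proof.
move=> <-; rewrite inQ_dot; apply: eq_modX0_dot => i j.
have castnat (n : nat) : ((n%:R : int)%:~R : rat) = n%:R by rewrite natz.
by rewrite !mxE !(intrD, intrB, intrN, castnat, mulr1z); ring.
Qed.

Lemma trns_rep_congr mu s w l (z : 'M[int]_(f, 1)) :
  resZ (l - mu + Defs.eta f int) = p%:R *: z - piM z ->
  (forall i, (3 %| z i ord0 + rowsum s (ordS i))%Z) ->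
  exists2 nu, sumzero nu & congr p l (trns_rep mu s nu w).
Proof.
move=> /matrixP lz div3.
(* nu is forced up to (p - pi) c with c in X^0(T); choosing c by exact
   division by 3 makes the row sums of nu vanish. *)
pose c : 'M[int]_(f, 3) := \matrix_(i, j) ((z i ord0 + rowsum s (ordS i)) %/ 3)%Z.
pose d := p%:R *: c - piM c.
exists (\matrix_(i, j) ((l + Defs.eta f int) i (w i j) - mu i j
                        + p%:R * s (ordS i) j - s i j - d i j)).
  move=> i; have := sum3_perm (w i) (fun j => (l + Defs.eta f int) i j).
  have := lz i ord0; have := congr1 (fun q => p%:R * q) (divzK (div3 i)).
  have := divzK (div3 (ord_pred i)).
  by rewrite /resZ /rowsum !mxE ord_predK /= /rowsum; lia.
exists c; split; first by move=> i; rewrite !mxE.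
by apply/matrixP => i j; rewrite /trns_rep /dot !mxE permKV /=; ring.
Qed.

Lemma overline_rowsum_mod3 (a b : 'M[int]_(f, 3)) i :
  overline a = overline b -> (3 %| rowsum a i - rowsum b i)%Z.
Proof.
move=> /matrixP/(_ i c0); rewrite /overline /proj /inQ !mxE => ab.
apply/dvdzP; exists (a i c0 - b i c0); apply/eqP; rewrite -(eqr_int rat).
by rewrite /rowsum !(intrD, intrB, intrM); apply/eqP; lra.
Qed.

Definition wperm (k : 'I_f -> 'I_3) C : 'I_f -> 'S_3 :=
  fun i => (alc_perm (k i) (C i))^-1%g.

Definition wshift (k : 'I_f -> 'I_3) C : 'M[int]_(f, 3) :=
  \matrix_(i, j) alc_shift (k i) (C i) j.

Lemma maps_onto_wshift k C :
  maps_onto p (wperm k C) (overline (piM (wshift k C))) C.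
Proof.
move=> x; set y := dot p _ _ x.
have row i : rowAlc p AlcA (fun j => x i j) <-> rowAlc p (C i) (fun j => y i j).
  apply: rowAlc_alc_elt => j.
  by rewrite /y /dot !mxE invgK ordSK !intrD; ring.
by split=> H i; apply/row/H.
Qed.

Lemma rowsum_piM (R : nmodType) (X : 'M[R]_(f, 3)) i :
  rowsum (piM X) (ordS i) = rowsum X i.
Proof. by rewrite /rowsum !mxE ordSK. Qed.

Lemma rowsum_wshift k C i : rowsum (wshift k C) i = - (k i)%:Z.
Proof. by rewrite /rowsum !mxE alc_shift_sum. Qed.

Lemma inAlc_int_restricted_regular C l :
  inAlc p C (inQ l) -> X1 p l /\ pregular p l.
Proof.
move=> l_C.
have row i : rowAlc p (C i) (fun j => l i j).
  by apply/rowAlc_int; have := l_C i; rewrite /inQ !mxE.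
by split=> i; have [] := rowAlc_int_restricted_regular (row i).
Qed.

Lemma restricted_regular_inAlc l :
  X1 p l -> pregular p l -> exists C, inAlc p C (inQ l).
Proof.
move=> lX1 lreg; exists (fun i => alc_of p (fun j => l i j)) => i.
by have := restricted_regular_rowAlc (lX1 i) (lreg i); rewrite -rowAlc_int /inQ !mxE.
Qed.

Lemma Trns_restricted_regular mu sec l :
  (forall om, inLW om -> overline (sec om) = om) ->
  (exists om' A', inLWmu p mu om' /\ Trns p mu sec om' A' l) ->
  exists l1, [/\ congr p l l1, X1 p l1, pregular p l1 & central p mu l1].
Proof.
move=> sec_om [om' [_ [[_ x_A] [om [nu [w [C [[om_LW nu0] om'E wC _ l_rep]]]]]]]].
rewrite {}om'E in x_A.
exists (trns_rep mu (sec om) nu w).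
have rep_C : inAlc p C (inQ (trns_rep mu (sec om) nu w)).
  apply/(inAlc_eq_modX0 _ (trns_rep_eq_modX0 _ _ _ (sec_om _ om_LW))).
  exact: (wC _).1 x_A.
have [rep_X1 rep_reg] := inAlc_int_restricted_regular rep_C.
by split => //; apply: central_trns_rep.
Qed.

Lemma restricted_regular_Trns mu sec l :
  (forall om, inLW om -> overline (sec om) = om) ->
  (exists l1, [/\ congr p l l1, X1 p l1, pregular p l1 & central p mu l1]) ->
  exists om' A', inLWmu p mu om' /\ Trns p mu sec om' A' l.
Proof.
move=> sec_om [l1 [l_l1 l1X1 l1reg [z l1z]]].
have [C l1_C] := restricted_regular_inAlc l1X1 l1reg.
pose k i := residue3 (z i ord0).
pose om := overline (piM (wshift k C)).
have om_LW : inLW om by exists (piM (wshift k C)).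
have secE := sec_om _ om_LW.
have div3 i : (3 %| z i ord0 + rowsum (sec om) (ordS i))%Z.
  have := overline_rowsum_mod3 (ordS i) secE.
  rewrite rowsum_piM rowsum_wshift => sec_t.
  have -> : z i ord0 + rowsum (sec om) (ordS i) =
            (z i ord0 - (k i)%:Z) + (rowsum (sec om) (ordS i) - - (k i)%:Z) by lia.
  exact: rpredD (dvdz_sub_residue3 _) sec_t.
have [nu nu0 l1_rep] := trns_rep_congr (wperm k C) l1z div3.
have rep_C : inAlc p C (inQ (trns_rep mu (sec om) nu (wperm k C))).
  exact: (inAlc_eq_modX0 _ (congr_eq_modX0 l1_rep)).1 l1_C.
exists (om + inQ nu), (piAlc C); split.
  split; first by exists (piM (wshift k C) + nu); rewrite overline_add.
  apply/(maps_onto_wshift k C _).2.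
  exact: (inAlc_eq_modX0 _ (trns_rep_eq_modX0 _ _ _ secE)).1 rep_C.
exists om, nu, (wperm k C), C; split=> //; first exact: maps_onto_wshift.
exact: congr_trans l_l1 l1_rep.
Qed.

End Weights.

Theorem proposition2p6 (p f : nat) (mu : 'M[int]_(f, 3))
    (sec : 'M[rat]_(f, 3) -> 'M[int]_(f, 3)) :
  prime p -> (0 < f)%N ->
  (forall om, inLW om -> overline (sec om) = om) ->
  forall l : 'M[int]_(f, 3),
    (exists (om' : 'M[rat]_(f, 3)) (A' : 'I_f -> Alc),
        inLWmu p mu om' /\ Trns p mu sec om' A' l)
    <->
    (exists l1, [/\ congr p l l1, X1 p l1, pregular p l1 & central p mu l1]).
Proof.
move=> _ _ sec_om l; split.
  exact: Trns_restricted_regular.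
exact: restricted_regular_Trns.
Qed.
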